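(* Let $d\ge 1$ be an integer and for each subset $J\subseteq[d]$ let $Q_J\in\mathbb{R}^{d-1}$ be a point. Then there is an index $i\in[d]$ such that \[ \operatorname{conv}\{Q_J: J\subseteq[d],\ i\in J\}\cap\operatorname{conv}\{Q_J: J\subseteq[d],\ i\notin J\}\neq\emptyset. \]
   Context: $[d]=\{1,\dots,d\}$. *)

From HB Require Import structures.
From mathcomp Require Import all_boot all_order all_algebra.
From mathcomp Require Import reals.
Set Implicit Arguments. Unset Strict Implicit. Unset Printing Implicit Defensive.
Import Order.TTheory GRing.Theory Num.Theory.
Local Open Scope ring_scope.

Definition in_conv_hull (R : numDomainType) (I : finType) (n : nat)
    (Q : I -> 'rV[R]_n) (A : {set I}) (x : 'rV[R]_n) : Prop :=
  exists lam : I -> R,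
    [/\ forall i, 0 <= lam i,
        forall i, i \notin A -> lam i = 0,
        \sum_i lam i = 1
      & x = \sum_i lam i *: Q i].

From HB Require Import structures.
From mathcomp Require Import all_boot all_order all_algebra.
From mathcomp Require Import reals boolp lra.
Set Implicit Arguments. Unset Strict Implicit. Unset Printing Implicit Defensive.
Import Order.TTheory GRing.Theory Num.Theory.
Local Open Scope ring_scope.

(* If the two hulls were disjoint for every i, Gordan's theorem would give for
   each i an affine function f_i on R^(d-1) that is positive at the Q_J with
   i in J and negative at the Q_J with i notin J.  The affine map
   f = (f_1, ..., f_d) : R^(d-1) -> R^d would then meet every open orthant,
   as f(Q_J) lies in the orthant with sign pattern J.  But the linear part of f
   has a nonzero u in its kernel, so f(x).u is a constant c; the orthants with
   the sign patterns of u and of -u force c > 0 and c < 0. *)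

Section Gordan.
Variable R : realFieldType.

Definition nonneg_dependent (I : finType) m (v : I -> 'rV[R]_m) : Prop :=
  exists c : I -> R,
    [/\ forall i, 0 <= c i, exists i, c i != 0 & \sum_i c i *: v i = 0].

Definition in_open_halfspace (I : finType) m (v : I -> 'rV[R]_m) : Prop :=
  exists w : 'cV[R]_m, forall i, 0 < (v i *m w) 0 0.

Lemma exists_between (I : finType) (P N : pred I) (L U : I -> R) :
  (forall p n, P p -> N n -> L p < U n) ->
  exists t, (forall p, P p -> L p < t) /\ (forall n, N n -> t < U n).
Proof.
move=> LU.
case: (pickP P) => [p0 Pp0|P0]; case: (pickP N) => [n0 Nn0|N0].
- case: (arg_maxP L Pp0) => p Pp Lp; case: (arg_minP U Nn0) => n Nn Un.
  have [h1 h2] := midf_lt (LU _ _ Pp Nn).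
  exists ((L p + U n) / 2); split => [q Pq|q Nq].
  + exact: le_lt_trans (Lp _ Pq) h1.
  + exact: lt_le_trans h2 (Un _ Nq).
- case: (arg_maxP L Pp0) => p Pp Lp.
  exists (L p + 1); split => [q Pq|q]; last by rewrite N0.
  by apply: le_lt_trans (Lp _ Pq) _; rewrite ltrDl ltr01.
- case: (arg_minP U Nn0) => n Nn Un.
  exists (U n - 1); split => [q|q Nq]; first by rewrite P0.
  by apply: lt_le_trans (Un _ Nq); rewrite gtrDl oppr_lt0 ltr01.
- by exists 0; split => q; rewrite ?P0 ?N0.
Qed.

Lemma sum_delta_scale (V : lmodType R) (I : finType) (j : I) (F : I -> V) :
  \sum_i (i == j)%:R *: F i = F j.
Proof.
rewrite (bigD1 j) //= eqxx scale1r big1 ?addr0 // => i /negbTE ->.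
by rewrite scale0r.
Qed.

(* Fourier-Motzkin elimination of the first coordinate a i of the v i. *)
Section FourierMotzkin.
Variables (I : finType) (m : nat) (v : I -> 'rV[R]_(1 + m)).

Let a i : R := lsubmx (v i) 0 0.

Definition elim_ok (x : I + I * I) : bool :=
  match x with inl z => a z == 0 | inr (p, n) => (0 < a p) && (a n < 0) end.

Definition elim_coef (x : I + I * I) (i : I) : R :=
  match x with
  | inl z => (i == z)%:R
  | inr (p, n) => (i == p)%:R * - a n + (i == n)%:R * a p
  end.

Definition elim_vec (x : I + I * I) : 'rV[R]_(1 + m) :=
  \sum_i elim_coef x i *: v i.

Lemma elim_vecE x : elim_vec x =
  match x with inl z => v z | inr (p, n) => - a n *: v p + a p *: v n end.
Proof.
rewrite /elim_vec; case: x => [z|[p n]]; first exact: sum_delta_scale.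
under eq_bigr do rewrite scalerDl -!scalerA.
by rewrite big_split /= !sum_delta_scale.
Qed.

Lemma elim_coef_ge0 x i : elim_ok x -> 0 <= elim_coef x i.
Proof.
case: x => [z|[p n]] /=; first by rewrite ler0n.
case/andP=> ap an; apply: addr_ge0; apply: mulr_ge0; rewrite ?ler0n //.
  by rewrite oppr_ge0 ltW.
exact: ltW.
Qed.

Lemma elim_coef_pos x : elim_ok x -> exists i, 0 < elim_coef x i.
Proof.
case: x => [z|[p n]] /=; first by exists z; rewrite eqxx ltr01.
case/andP=> ap an; exists p.
have pn : (p == n) = false by apply: contraTF ap => /eqP ->; rewrite -leNgt ltW.
by rewrite eqxx pn mul1r mul0r addr0 oppr_gt0.
Qed.

Lemma lsubmx_elim_vec x : elim_ok x -> lsubmx (elim_vec x) = 0.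
Proof.
rewrite elim_vecE; case: x => [z /eqP az|[p n] _]; apply/rowP => j.
  by rewrite ord1 -/(a z) az mxE.
by rewrite ord1 linearD !linearZ !mxE /a !mxE mulNr mulrC addNr.
Qed.

Definition elim_index := {x : I + I * I | elim_ok x}.

Definition elim_family (x : elim_index) : 'rV[R]_m := rsubmx (elim_vec (val x)).

Lemma nonneg_dependent_elim :
  nonneg_dependent elim_family -> nonneg_dependent v.
Proof.
case=> c [c_ge0 [x0 cx0] c_rel].
have term_ge0 x i : 0 <= c x * elim_coef (val x) i.
  by rewrite mulr_ge0 ?elim_coef_ge0 ?(valP x).
exists (fun i => \sum_x c x * elim_coef (val x) i); split.
- by move=> i; apply: sumr_ge0 => x _.
- have [i0 coef_gt0] := elim_coef_pos (valP x0).
  exists i0; rewrite (bigD1 x0) //= gt_eqF // ltr_pwDl ?sumr_ge0 //.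
  by rewrite mulr_gt0 // lt0r cx0 c_ge0.
have -> : \sum_i (\sum_x c x * elim_coef (val x) i) *: v i =
    \sum_x c x *: elim_vec (val x).
  under eq_bigr do rewrite scaler_suml.
  rewrite exchange_big; apply: eq_bigr => x _.
  by rewrite /elim_vec scaler_sumr; apply: eq_bigr => i _; rewrite scalerA.
rewrite -[LHS]hsubmxK; apply/eqP; rewrite row_mx_eq0 !linear_sum /=.
rewrite -{2}c_rel; apply/andP; split; apply/eqP.
  by apply: big1 => x _; rewrite linearZ /= (lsubmx_elim_vec (valP x)) scaler0.
by under eq_bigr do rewrite linearZ.
Qed.

Lemma in_open_halfspace_elim :
  in_open_halfspace elim_family -> in_open_halfspace v.
Proof.
case=> w' w'_pos.
pose D i := (rsubmx (v i) *m w') 0 0.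
have elimE x : (elim_family x *m w') 0 0 = match val x with
    inl z => D z | inr (p, n) => - a n * D p + a p * D n end.
  rewrite /elim_family elim_vecE; case: (val x) => [z|[p n]] //.
  by rewrite linearD !linearZ /= mulmxDl -!scalemxAl /D !mxE.
have [t [t_lo t_up]] : exists t,
    (forall p, 0 < a p -> - D p / a p < t) /\
    (forall n, a n < 0 -> t < D n / - a n).
  apply: exists_between => p n ap an.
  have ok : elim_ok (inr (p, n)) by rewrite /= ap an.
  have := w'_pos (exist _ (inr (p, n)) ok); rewrite elimE /= => Dpn.
  (* cross-multiplying by a p > 0 and - a n > 0 turns the bound into Dpn *)
  rewrite ltr_pdivlMr ?oppr_gt0 // mulrAC ltr_pdivrMr //; nra.
exists (col_mx t%:M w') => i.
rewrite -[v i]hsubmxK mul_row_col mul_mx_scalar mxE [X in X + _]mxE.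
rewrite -/(a i) -/(D i).
case: (ltrgt0P (a i)) => ai.
- by have := t_lo _ ai; rewrite ltr_pdivrMr //; lra.
- by have := t_up _ ai; rewrite ltr_pdivlMr ?oppr_gt0 //; lra.
- have ok : elim_ok (inl i) by rewrite /= ai.
  by have := w'_pos (exist _ (inl i) ok); rewrite elimE /= ai mulr0 add0r.
Qed.

End FourierMotzkin.

Theorem gordan (I : finType) m (v : I -> 'rV[R]_m) :
  nonneg_dependent v \/ in_open_halfspace v.
Proof.
elim: m I v => [|m IH] I v.
  case: (pickP (@predT I)) => [i0 _|I0]; last first.
    by right; exists 0 => i; have := I0 i.
  left; exists (fun i => (i == i0)%:R); split.
  - by move=> i; rewrite ler0n.
  - by exists i0; rewrite eqxx oner_neq0.
  by rewrite sum_delta_scale; apply/rowP => -[].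
case: (IH _ (@elim_family _ _ v)).
  by move/nonneg_dependent_elim; left.
by move/in_open_halfspace_elim; right.
Qed.

End Gordan.

Section ConvexHulls.
Variable R : realFieldType.

Lemma in_conv_hull_barycenter (I : finType) n (Q : I -> 'rV[R]_n)
    (P : pred I) (c : I -> R) :
  (forall i, P i -> 0 <= c i) -> 0 < \sum_(i | P i) c i ->
  in_conv_hull Q [set i | P i]
    ((\sum_(i | P i) c i)^-1 *: \sum_(i | P i) c i *: Q i).
Proof.
move=> c_ge0 S_gt0; set S := \sum_(i | P i) c i.
exists (fun i => if P i then c i / S else 0); split.
- by move=> i; case: ifP => // /c_ge0 ci; rewrite divr_ge0 // ltW.
- by move=> i; rewrite inE => /negbTE ->.
- by rewrite -big_mkcond /= -mulr_suml divff // gt_eqF.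
rewrite scaler_sumr big_mkcond /=; apply: eq_bigr => i _.
by case: ifP => _; rewrite ?scale0r ?scaler0 // scalerA mulrC.
Qed.

Lemma sum_sign_scale (V : lmodType R) (I : finType) (P : pred I) (F : I -> V) :
  \sum_i (-1) ^+ (~~ P i) *: F i = \sum_(i | P i) F i - \sum_(i | ~~ P i) F i.
Proof.
rewrite (bigID P) /= -sumrN; congr (_ + _); apply: eq_bigr => i.
  by move=> ->; rewrite scale1r.
by move/negbTE=> ->; rewrite scaleN1r.
Qed.

Lemma sum_row_mx (I : finType) (P : pred I) m n1 n2
    (A : I -> 'M[R]_(m, n1)) (B : I -> 'M[R]_(m, n2)) :
  \sum_(i | P i) row_mx (A i) (B i) =
  row_mx (\sum_(i | P i) A i) (\sum_(i | P i) B i).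
Proof.
by elim/big_rec3: _ => [|i x y z _ ->]; rewrite ?row_mx0 // add_row_mx.
Qed.

Lemma conv_hull_meet_of_dependent (I : finType) n (Q : I -> 'rV[R]_n)
    (P : pred I) :
  nonneg_dependent (fun i => (-1) ^+ (~~ P i) *: row_mx 1 (Q i)) ->
  exists x, in_conv_hull Q [set i | P i] x /\ in_conv_hull Q [set i | ~~ P i] x.
Proof.
case=> c [c_ge0 [i0 ci0] c_rel].
have balance : \sum_(i | P i) c i *: row_mx 1 (Q i) =
               \sum_(i | ~~ P i) c i *: row_mx 1 (Q i).
  apply/eqP; rewrite -subr_eq0 -sum_sign_scale -{2}c_rel; apply/eqP.
  by apply: eq_bigr => i _; rewrite !scalerA mulrC.
move: balance; under eq_bigr do rewrite scale_row_mx.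
under [RHS]eq_bigr do rewrite scale_row_mx.
rewrite !sum_row_mx -!scaler_suml => /eq_row_mx[].
move/(congr1 (fun A : 'rV[R]_1 => A 0 0)); rewrite !mxE !mulr1 => weightE pointE.
have S_gt0 : 0 < \sum_(i | P i) c i.
  have : 0 < \sum_i c i.
    by rewrite (bigD1 i0) //= ltr_pwDl ?sumr_ge0 // lt0r ci0 c_ge0.
  by rewrite (bigID P) /= -weightE; lra.
exists ((\sum_(i | P i) c i)^-1 *: \sum_(i | P i) c i *: Q i).
split; first exact: in_conv_hull_barycenter.
by rewrite weightE pointE; apply: in_conv_hull_barycenter => //; rewrite -weightE.
Qed.

End ConvexHulls.

Lemma nonzero_kernel (F : fieldType) m n (A : 'M[F]_(m, n)) :
  (m < n)%N -> exists2 u : 'cV[F]_n, u != 0 & A *m u = 0.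
Proof.
move=> lt_mn; set K := kermx A^T.
have K_neq0 : K != 0.
  rewrite -mxrank_eq0 mxrank_ker mxrank_tr -lt0n subn_gt0.
  exact: leq_ltn_trans (rank_leq_row A) lt_mn.
exists (nz_row K)^T; first by rewrite trmx_eq0 nz_row_eq0.
by rewrite -[A]trmxK -trmx_mul; apply/eqP; rewrite trmx_eq0 -sub_kermx nz_row_sub.
Qed.

Section Orthants.
Variable R : realFieldType.

Lemma sign_pattern_mul_gt0 n (u : 'cV[R]_n) (y : 'rV[R]_n) : u != 0 ->
    (forall i, 0 < (-1) ^+ (i \notin [set i | 0 < u i 0]) * y 0 i) ->
  0 < (y *m u) 0 0.
Proof.
move=> u_neq0 y_sign.
have term_gt0 i : u i 0 != 0 -> 0 < y 0 i * u i 0.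
  move: (y_sign i); rewrite inE; case: (ltrgt0P (u i 0)) => //= ui.
    by rewrite expr0 mul1r => yi _; rewrite mulr_gt0.
  by rewrite expr1 mulN1r oppr_gt0 => yi _; rewrite nmulr_rgt0.
have term_ge0 i : 0 <= y 0 i * u i 0.
  by case: (eqVneq (u i 0) 0) => [->|/term_gt0/ltW //]; rewrite mulr0.
have [j uj] : exists j, u j 0 != 0.
  by case/matrix0Pn: u_neq0 => j [k]; rewrite ord1; exists j.
by rewrite mxE (bigD1 j) //= ltr_pwDl ?term_gt0 ?sumr_ge0.
Qed.

Lemma affine_image_misses_orthant n (b : 'rV[R]_n.+1) (M : 'M[R]_(n, n.+1)) :
  ~ (forall J : {set 'I_n.+1}, exists x : 'rV[R]_n,
       forall i, 0 < (-1) ^+ (i \notin J) * (b + x *m M) 0 i).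
Proof.
move=> meets_all.
have [u u_neq0 Mu] := nonzero_kernel M (ltnSn n).
have valueE x : (b + x *m M) *m u = b *m u.
  by rewrite mulmxDl -mulmxA Mu mulmx0 addr0.
have [x /(sign_pattern_mul_gt0 u_neq0)] := meets_all [set i | 0 < u i 0].
have [x' /(sign_pattern_mul_gt0 (u := - u))] := meets_all [set i | 0 < (- u) i 0].
by rewrite oppr_eq0 mulmxN !valueE mxE => /(_ u_neq0); lra.
Qed.

End Orthants.

Theorem lemma6 (R : realType) (d : nat) (hd : (1 <= d)%N)
    (Q : {set 'I_d} -> 'rV[R]_(d.-1)) :
  exists i : 'I_d, exists x : 'rV[R]_(d.-1),
    in_conv_hull Q [set J : {set 'I_d} | i \in J] x /\
    in_conv_hull Q [set J : {set 'I_d} | i \notin J] x.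
Proof.
case: d hd Q => // n _ Q /=; apply: contrapT => no_meet.
pose v i (J : {set 'I_n.+1}) : 'rV[R]_(1 + n) :=
  (-1) ^+ (i \notin J) *: row_mx 1 (Q J).
have halfspace i : in_open_halfspace (v i).
  case: (gordan (v i)) => // dep.
  by case: no_meet; exists i; exact: (conv_hull_meet_of_dependent dep).
have [w w_pos] := fin_all_exists halfspace.
pose b := \row_i usubmx (w i) 0 0; pose M := \matrix_(k, i) dsubmx (w i) k 0.
apply: (affine_image_misses_orthant (b := b) (M := M)) => J; exists (Q J) => i.
have := w_pos i J; rewrite -scalemxAl mxE -[w i]vsubmxK mul_row_col mul1mx.
by rewrite !mxE; congr (0 < _ * (_ + _)); apply: eq_bigr => k _; rewrite !mxE.
Qed.
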